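(* A graph $G$ is $\gamma\gamma_{\rm cer}$-perfect if and only if $G$ is $P_4$-free.
   Context: All graphs are finite and simple. A graph is $P_4$-free if it has no induced subgraph isomorphic to the path $P_4$ on four vertices. A set $D\subseteq V_G$ is a dominating set of $G$ if every vertex of $V_G-D$ has a neighbor in $D$; $\gamma(G)$ is the minimum cardinality of a dominating set. A set $D\subseteq V_G$ is a certified dominating set of $G$ if $D$ is a dominating set of $G$ and every vertex of $D$ has either zero or at least two neighbors in $V_G-D$; $\gamma_{\rm cer}(G)$ is the minimum cardinality of a certified dominating set of $G$. A graph $G$ is $\gamma\gamma_{\rm cer}$-perfect if $\gamma(H)=\gamma_{\rm cer}(H)$ for every induced connected subgraph $H$ of $G$ with $H\neq K_2$. *)

(* A finite simple graph G is a finType T of vertices with a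
   symmetric irreflexive adjacency relation e. Induced subgraphs of G are
   given by their vertex sets S : {set T}. *)
From mathcomp Require Import all_boot.
Set Implicit Arguments. Unset Strict Implicit. Unset Printing Implicit Defensive.

Section Graphs.
Variables (T : finType) (e : rel T).

Definition dominating (S D : {set T}) : bool :=
  (D \subset S) && [forall v in S :\: D, [exists u in D, e v u]].

Definition ndeg (A : {set T}) (v : T) : nat := #|[set u in A | e v u]|.

Definition certified_dominating (S D : {set T}) : bool :=
  dominating S D &&
  [forall v in D, (ndeg (S :\: D) v == 0) || (1 < ndeg (S :\: D) v)].

Lemma dominating_exists (S : {set T}) :
  exists n, [exists D : {set T}, dominating S D && (#|D| == n)].
Proof.
exists #|S|; apply/existsP; exists S; rewrite eqxx andbT /dominating subxx /=.
by apply/forallP => v; rewrite setDv inE.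
Qed.

Lemma certified_dominating_exists (S : {set T}) :
  exists n, [exists D : {set T}, certified_dominating S D && (#|D| == n)].
Proof.
exists #|S|; apply/existsP; exists S; rewrite eqxx andbT /certified_dominating.
rewrite /dominating subxx /=; apply/andP; split.
  by apply/forallP => v; rewrite setDv inE.
apply/forallP => v; apply/implyP => _.
by rewrite /ndeg setDv (_ : [set u in set0 | e v u] = set0) ?cards0 //;
  apply/setP => u; rewrite !inE.
Qed.

Definition gamma (S : {set T}) : nat := ex_minn (dominating_exists S).
Definition gamma_cer (S : {set T}) : nat :=
  ex_minn (certified_dominating_exists S).

Definition induced_connected (S : {set T}) : Prop :=
  S != set0 /\
  {in S &, forall x y, connect (fun a b => [&& a \in S, b \in S & e a b]) x y}.

Definition is_K2 (S : {set T}) : Prop :=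
  exists x y, [/\ x != y, S = [set x; y] & e x y].

Definition gamma_gammacer_perfect : Prop :=
  forall S : {set T}, induced_connected S -> ~ is_K2 S -> gamma S = gamma_cer S.

Definition P4_free : Prop :=
  ~ exists a b c d : T,
      [/\ uniq [:: a; b; c; d],
          [&& e a b, e b c & e c d] &
          [&& ~~ e a c, ~~ e a d & ~~ e b d]].

End Graphs.

From mathcomp Require Import all_boot.
Set Implicit Arguments. Unset Strict Implicit. Unset Printing Implicit Defensive.

(* An induced path a-b-c-d is dominated by {b, c}, but a certified dominating
   set must contain b (else a would see D, or be seen from D, through the
   single edge ab), likewise c, and then a and d (else b or c would have a
   single neighbour outside D); so gamma = 2 < 4 = gamma_cer.
   Conversely, by Seinsche's theorem a connected P4-free graph on at least two
   vertices is the join of two nonempty parts X and Y.  A vertex adjacent to all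
   others is a certified dominating set on its own unless the graph is K2.
   Otherwise gamma >= 2, both parts have at least two vertices, and a part of
   size at most 2, or one vertex from each part, is a certified dominating set. *)

Lemma setDDK (T : finType) (S X : {set T}) : X \subset S -> S :\: (S :\: X) = X.
Proof. by move=> XS; rewrite setDDr setDv set0U; apply/setIidPr. Qed.

Section Cographs.
Variable T : finType.

Definition P4 (r : rel T) (a b c d : T) : bool :=
  [&& r a b, r b c, r c d, ~~ r a c, ~~ r a d & ~~ r b d].

Definition no_P4 (r : rel T) : Prop := forall a b c d, ~~ P4 r a b c d.

Definition compl (r : rel T) : rel T := fun x y => ~~ r x y.

Definition disconnects (r : rel T) (S X : {set T}) : Prop :=
  [/\ X \subset S, X != set0, X != S & {in X & S :\: X, forall x y, ~~ r x y}].

Section SymmetricRelation.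
Variable r : rel T.
Hypothesis r_sym : symmetric r.

Lemma compl_sym : symmetric (compl r).
Proof. by move=> x y; rewrite /compl r_sym. Qed.

Lemma P4_rev (a b c d : T) : P4 r a b c d -> P4 r d c b a.
Proof.
case/and4P=> ab bc cd /and3P[ac ad bd].
by rewrite /P4 !(r_sym d) (r_sym c b) (r_sym b a) (r_sym c a) ab bc cd ac ad bd.
Qed.

Lemma P4_complE (a b c d : T) : P4 (compl r) a b c d = P4 r b d a c.
Proof.
rewrite /P4 /compl !negbK (r_sym b a) (r_sym d c) (r_sym d a).
by case: (r a b); case: (r b c); case: (r c d); case: (r a c); case: (r a d); case: (r b d).
Qed.

Lemma no_P4_compl : no_P4 r -> no_P4 (compl r).
Proof. by move=> noP4 a b c d; rewrite P4_complE. Qed.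

(* Symmetry alone forces distinct vertices, so this also applies to the
   (reflexive) complement of a graph. *)
Lemma P4_uniq (a b c d : T) : P4 r a b c d -> uniq [:: a; b; c; d].
Proof.
have ne x y z : r x z -> ~~ r y z -> x != y by move=> xz; apply: contraNneq => <-.
case/and4P=> ab bc cd /and3P[ac ad bd]; rewrite /= !inE !negb_or andbT.
rewrite -![a == _]eq_sym -[b == c]eq_sym.
by rewrite (ne b a c) ?(ne c a d) ?(ne d a c) ?(ne c b d) ?(ne b d a) ?(ne c d b) // r_sym.
Qed.

Lemma P4_freeE : P4_free r <-> no_P4 r.
Proof.
split=> [free a b c d|noP4 [a [b [c [d [_ /and3P[ab bc cd] /and3P[ac ad bd]]]]]]].
  apply/negP => abcd; apply: free; exists a, b, c, d; split; first exact: P4_uniq.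
    by case/and4P: abcd => -> -> ->.
  by case/and4P: abcd => _ _ _ /and3P[-> -> ->].
by have := noP4 a b c d; rewrite /P4 ab bc cd ac ad bd.
Qed.

Lemma disconnects_cross (S X : {set T}) (x y : T) : disconnects r S X ->
  x \in S -> y \in S -> (x \in X) != (y \in X) -> ~~ r x y.
Proof.
case=> _ _ _ cut xS yS; case xX: (x \in X); case yX: (y \in X) => //= _.
  by apply: cut; rewrite // inE yX.
by rewrite r_sym; apply: cut; rewrite // inE xX.
Qed.

Lemma disconnects_edge (S X : {set T}) (x y : T) : disconnects r S X ->
  x \in S -> y \in S -> r x y -> (x \in X) = (y \in X).
Proof. by move=> cutX xS yS; apply: contraTeq => /(disconnects_cross cutX xS yS). Qed.

Lemma disconnects_card_gt1 (S X : {set T}) : disconnects r S X -> 1 < #|S|.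
Proof.
case=> XS X0 XnS _; have XsubS : X \proper S by rewrite properEneq XnS.
by apply: leq_ltn_trans (proper_card XsubS); rewrite card_gt0.
Qed.

Lemma disconnectsC (S X : {set T}) : disconnects r S X -> disconnects r S (S :\: X).
Proof.
move=> cutX; have [XS X0 XnS _] := cutX; split.
- exact: subsetDl.
- by apply: contraNneq XnS => /eqP; rewrite setD_eq0 => SX; rewrite eqEsubset XS SX.
- case/set0Pn: X0 => x xX; apply/eqP => SX.
  by have := subsetP XS x xX; rewrite -SX inE xX.
- move=> x y; rewrite !inE => /andP[xX xS] /andP[+ yS]; rewrite yS andbT negbK => yX.
  by apply: (disconnects_cross cutX) => //; rewrite (negbTE xX) yX.
Qed.

Lemma disconnects_set1 (S : {set T}) (v : T) : v \in S -> 1 < #|S| ->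
  {in S :\ v, forall u, ~~ r v u} -> disconnects r S [set v].
Proof.
move=> vS S2 nv; split=> [||| u w].
- by rewrite sub1set.
- by apply/set0Pn; exists v; rewrite set11.
- by apply: contraTneq S2 => <-; rewrite cards1.
- by rewrite inE => /eqP->; apply: nv.
Qed.

Lemma disconnects_extend (S X : {set T}) (v : T) : v \in S -> disconnects r (S :\ v) X ->
  {in X, forall x, ~~ r x v} -> disconnects r S X.
Proof.
move=> vS [XSv X0 _ cut] Xv.
have vX : v \notin X by apply/negP => /(subsetP XSv); rewrite !inE eqxx.
split=> //.
- exact: subset_trans XSv (subD1set S v).
- by apply: contraNneq vX => ->.
- move=> x y xX; rewrite inE => /andP[yX yS]; have [->|yv] := eqVneq y v.
    exact: Xv.
  by apply: cut; rewrite // !inE yv yX yS.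
Qed.

Hypothesis noP4 : no_P4 r.

(* A [P4] [u w v t] would arise from an edge [u w] between a non-neighbour [u]
   and a neighbour [w] of [v], with [t] a neighbour of [v] on the other side of [X]. *)
Lemma disconnects_non_neighbours (S X : {set T}) (v x y z : T) :
  v \in S -> disconnects r (S :\ v) X -> x \in X -> y \in (S :\ v) :\: X ->
  r v x -> r v y -> z \in S :\ v -> ~~ r v z ->
  disconnects r S [set u in S :\ v | ~~ r v u].
Proof.
move=> vS cutX xX yY vx vy zS vz; have [XSv _ _ _] := cutX.
move: yY; rewrite inE => /andP[yX yS].
split=> [||| u w].
- by apply/subsetP => u; rewrite !inE => /andP[/andP[_ ->]].
- by apply/set0Pn; exists z; rewrite inE zS.
- by apply/eqP => NS; move: vS; rewrite -NS !inE eqxx.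
rewrite !inE => /andP[/andP[uv uS] vu] /andP[wN wS].
have [->|wv] := eqVneq w v; first by rewrite r_sym.
move: wN; rewrite wv wS /= negbK => vw.
have uS' : u \in S :\ v by rewrite !inE uv.
have wS' : w \in S :\ v by rewrite !inE wv.
apply/negP => uw; pose t := if u \in X then y else x.
have tS : t \in S :\ v by rewrite /t; case: ifP => _; last exact: subsetP XSv x xX.
have ut : (u \in X) != (t \in X) by rewrite /t; case: ifP; rewrite ?xX ?(negbTE yX).
have vt : r v t by rewrite /t; case: ifP.
apply: (negP (noP4 u w v t)); rewrite /P4 uw r_sym vw vt r_sym vu.
rewrite !(disconnects_cross cutX) // -(disconnects_edge cutX uS' wS' uw) //.
Qed.

Lemma disconnects_add_vertex (S X : {set T}) (v z : T) :
  v \in S -> disconnects r (S :\ v) X -> z \in S :\ v -> ~~ r v z ->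
  exists Y, disconnects r S Y.
Proof.
move=> vS cutX zS vz.
case: (boolP [exists x in X, r v x]) => [/exists_inP[x xX vx]|/exists_inPn noX]; last first.
  by exists X; apply: disconnects_extend cutX _ => // x /noX; rewrite r_sym.
case: (boolP [exists y in (S :\ v) :\: X, r v y]).
  case/exists_inP=> y yY vy; eexists.
  exact: disconnects_non_neighbours cutX xX yY vx vy zS vz.
move/exists_inPn=> noY.
by eexists; apply: disconnects_extend (disconnectsC cutX) _ => // y /noY; rewrite r_sym.
Qed.

End SymmetricRelation.

Lemma cograph_decomposition (r : rel T) (S : {set T}) : symmetric r -> no_P4 r ->
  1 < #|S| -> (exists X, disconnects r S X) \/ (exists X, disconnects (compl r) S X).
Proof.
move=> r_sym noP4; have [n] := ubnP #|S|; elim: n S => // n IH S /ltnSE Sn S2.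
have [v vS] : exists v, v \in S by apply/card_gt0P; apply: ltnW.
case: (boolP [forall u in S :\ v, r v u]) => [/forall_inP v_all|/forall_inPn[z zS vz]].
  right; exists [set v]; apply: disconnects_set1 => // u /v_all.
  by rewrite /compl negbK.
case: (boolP [forall u in S :\ v, ~~ r v u]) => [/forall_inP v_none|/forall_inPn[w wS vw]].
  by left; exists [set v]; apply: disconnects_set1.
rewrite negbK in vw.
have Sv : #|S :\ v| < n by move: Sn; rewrite (cardsD1 v S) vS.
have Sv2 : 1 < #|S :\ v|.
  have zw : z != w by apply: contraNneq vz => ->.
  have zwS : [set z; w] \subset S :\ v by rewrite subUset !sub1set zS wS.
  by apply: leq_trans (subset_leq_card zwS); rewrite cards2 zw.
case: (IH _ Sv Sv2) => [[X cutX]|[X cutX]].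
  by left; apply: disconnects_add_vertex cutX zS vz.
right; have noP4c := no_P4_compl r_sym noP4.
apply: (disconnects_add_vertex (compl_sym r_sym) noP4c vS cutX wS).
by rewrite /compl negbK.
Qed.

End Cographs.

Section Domination.
Variables (T : finType) (e : rel T).
Hypothesis e_sym : symmetric e.

Lemma dominating_gamma (S : {set T}) : exists2 D, dominating e S D & #|D| = gamma e S.
Proof.
by rewrite /gamma; case: ex_minnP => m /existsP[D /andP[domD /eqP Dm]] _; exists D.
Qed.

Lemma gamma_min (S D : {set T}) : dominating e S D -> gamma e S <= #|D|.
Proof.
move=> domD; rewrite /gamma; case: ex_minnP => m _; apply.
by apply/existsP; exists D; rewrite domD eqxx.
Qed.

Lemma certified_gamma_cer (S : {set T}) :
  exists2 D, certified_dominating e S D & #|D| = gamma_cer e S.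
Proof.
by rewrite /gamma_cer; case: ex_minnP => m /existsP[D /andP[certD /eqP Dm]] _; exists D.
Qed.

Lemma gamma_cer_min (S D : {set T}) : certified_dominating e S D -> gamma_cer e S <= #|D|.
Proof.
move=> certD; rewrite /gamma_cer; case: ex_minnP => m _; apply.
by apply/existsP; exists D; rewrite certD eqxx.
Qed.

Lemma gamma_leq_gamma_cer (S : {set T}) : gamma e S <= gamma_cer e S.
Proof. by have [D /andP[domD _] <-] := certified_gamma_cer S; apply: gamma_min. Qed.

Lemma certified_dominating_self (S : {set T}) : certified_dominating e S S.
Proof.
rewrite /certified_dominating /dominating /ndeg subxx setDv /=.
apply/andP; split; apply/forall_inP => u; rewrite ?inE // => _.
by rewrite cards_eq0; apply/orP; left; apply/eqP/setP => w; rewrite !inE.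
Qed.

Lemma certified_ndeg_neq1 (S D : {set T}) (x : T) : certified_dominating e S D -> x \in D ->
  ndeg e (S :\: D) x != 1.
Proof. by case/andP=> _ /forall_inP/[apply]; case: ndeg => [|[]]. Qed.

Lemma leq_ndeg (A Y : {set T}) (u : T) : Y \subset A -> {in Y, forall w, e u w} ->
  #|Y| <= ndeg e A u.
Proof.
move=> YA Yu; apply/subset_leq_card/subsetP => w wY.
by rewrite inE (subsetP YA) ?Yu.
Qed.

Lemma gamma_gt0 (S : {set T}) : S != set0 -> 0 < gamma e S.
Proof.
case/set0Pn=> v vS; have [D /andP[_ /forall_inP domD] <-] := dominating_gamma S.
rewrite card_gt0; apply/set0Pn; case vD: (v \in D); first by exists v.
have vSD : v \in S :\: D by rewrite inE vD.
by have /exists_inP[u uD _] := domD v vSD; exists u.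
Qed.

Definition universal (S : {set T}) (w : T) : bool :=
  (w \in S) && [forall u in S :\ w, e w u].

Lemma gamma_gt1 (S : {set T}) : S != set0 -> (forall w, ~~ universal S w) -> 1 < gamma e S.
Proof.
move=> S0 nouniv; have := gamma_gt0 S0; rewrite leq_eqVlt => /orP[/eqP g1|//].
have [D /andP[DS /forall_inP domD] gD] := dominating_gamma S.
have /cards1P[w Dw] : #|D| == 1 by rewrite gD -g1.
rewrite {}Dw in DS domD; case/negP: (nouniv w); rewrite /universal -sub1set DS /=.
by apply/forall_inP => u /domD/exists_inP[x]; rewrite inE => /eqP->; rewrite e_sym.
Qed.

Lemma induced_connected_disconnects (S X : {set T}) :
  induced_connected e S -> ~ disconnects e S X.
Proof.
case=> _ Sconn cutX; have [XS X0 _ _] := cutX; have [_ Y0 _ _] := disconnectsC e_sym cutX.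
case/set0Pn: X0 => x xX; case/set0Pn: Y0 => y; rewrite inE => /andP[yX yS].
have cl : closed (fun a b => [&& a \in S, b \in S & e a b]) X.
  by move=> a b /and3P[aS bS ab]; apply: disconnects_edge cutX aS bS ab.
have := closed_connect cl (Sconn x y (subsetP XS x xX) yS).
by rewrite xX (negbTE yX).
Qed.

Lemma join_edge (S X : {set T}) (x y : T) : disconnects (compl e) S X ->
  x \in X -> y \in S :\: X -> e x y.
Proof. by case=> _ _ _ joinX xX yY; move: (joinX x y xX yY); rewrite /compl negbK. Qed.

Lemma certified_dominating_join (S X : {set T}) : disconnects (compl e) S X ->
  1 < #|S :\: X| -> certified_dominating e S X.
Proof.
move=> joinX Y2; have [XS /set0Pn[x xX] _ _] := joinX.
apply/andP; split; first (apply/andP; split=> //).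
  apply/forall_inP => u uY; apply/exists_inP; exists x => //.
  by rewrite e_sym; apply: join_edge joinX xX uY.
apply/forall_inP => u uX; rewrite (leq_trans Y2) ?orbT // leq_ndeg // => w.
exact: join_edge.
Qed.

Lemma join_universal (S : {set T}) (w : T) : universal S w -> 1 < #|S| ->
  disconnects (compl e) S [set w].
Proof.
case/andP=> wS /forall_inP wS' S2; apply: disconnects_set1 => // u /wS'.
by rewrite /compl negbK.
Qed.

Lemma universal_join_side (S X : {set T}) : disconnects (compl e) S X ->
  (forall w, ~~ universal S w) -> 1 < #|X|.
Proof.
move=> joinX nouniv; have [XS X0 _ _] := joinX.
rewrite ltnNge leq_eqVlt ltnS leqn0 cards_eq0 (negbTE X0) orbF; apply/negP.
case/cards1P=> w Xw; case/negP: (nouniv w); rewrite /universal -sub1set -Xw XS.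
by apply/forall_inP => u; apply: join_edge joinX _; rewrite Xw set11.
Qed.

Lemma universal_K2 (S : {set T}) (w : T) : universal S w -> #|S| = 2 -> is_K2 e S.
Proof.
case/andP=> wS /forall_inP wS' S2.
have /cards1P[x Sw] : #|S :\ w| == 1 by move: S2; rewrite (cardsD1 w S) wS add1n => -[->].
have xSw : x \in S :\ w by rewrite Sw set11.
exists w, x; split; last exact: wS'.
  by move: xSw; rewrite !inE eq_sym => /andP[].
by rewrite -(setD1K wS) Sw.
Qed.

Lemma gamma_cer_universal (S : {set T}) (w : T) : universal S w -> 2 < #|S| ->
  gamma_cer e S <= 1.
Proof.
move=> univ S3; have wS : w \in S by case/andP: univ.
rewrite -(cards1 w); apply/gamma_cer_min/certified_dominating_join.
  exact: join_universal univ (ltnW S3).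
by move: S3; rewrite (cardsD1 w S) wS.
Qed.

Lemma ndeg_join_pair (S X : {set T}) (x y : T) : disconnects (compl e) S X ->
  2 < #|S :\: X| -> x \in X -> y \in S :\: X -> 1 < ndeg e (S :\: [set x; y]) x.
Proof.
move=> joinX Y3 xX yY; apply: leq_trans (leq_ndeg (Y := S :\: X :\ y) _ _).
- by move: Y3; rewrite (cardsD1 y) yY.
- apply/subsetP => w; rewrite !inE => /and3P[wy wX wS].
  by rewrite negb_or wy wS !andbT; apply: contraNneq wX => ->.
- by move=> w /setD1P[_ wY]; apply: join_edge joinX xX wY.
Qed.

Lemma certified_dominating_pair (S X : {set T}) (x y : T) : disconnects (compl e) S X ->
  2 < #|X| -> 2 < #|S :\: X| -> x \in X -> y \in S :\: X ->
  certified_dominating e S [set x; y].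
Proof.
move=> joinX X3 Y3 xX yY; have [XS _ _ _] := joinX.
have joinY := disconnectsC (compl_sym e_sym) joinX.
have yS : y \in S by case/setDP: yY.
apply/andP; split; first (apply/andP; split).
- by rewrite subUset !sub1set yS (subsetP XS).
- apply/forall_inP => u; rewrite !inE => /andP[_ uS]; apply/exists_inP.
  case uX: (u \in X); [exists y | exists x]; rewrite ?inE ?eqxx ?orbT //.
    exact: join_edge joinX uX yY.
  by rewrite e_sym; apply: join_edge joinX xX _; rewrite inE uX.
- apply/forall_inP => u; rewrite !inE => /orP[]/eqP->; apply/orP; right.
    exact: ndeg_join_pair joinX Y3 xX yY.
  by rewrite setUC; apply: ndeg_join_pair joinY _ yY _; rewrite setDDK.
Qed.

Lemma gamma_cer_join (S X : {set T}) : disconnects (compl e) S X ->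
  1 < #|X| -> 1 < #|S :\: X| -> gamma_cer e S <= 2.
Proof.
move=> joinX X2 Y2; have [XS _ _ _] := joinX.
have joinY := disconnectsC (compl_sym e_sym) joinX.
case: (leqP #|X| 2) => [X2'|X3].
  exact: leq_trans (gamma_cer_min (certified_dominating_join joinX Y2)) X2'.
case: (leqP #|S :\: X| 2) => [Y2'|Y3].
  apply: leq_trans (gamma_cer_min (certified_dominating_join joinY _)) Y2'.
  by rewrite setDDK.
have [x xX] : exists x, x \in X by apply/card_gt0P; apply: leq_trans X3.
have [y yY] : exists y, y \in S :\: X by apply/card_gt0P; apply: leq_trans Y3.
apply: leq_trans (gamma_cer_min (certified_dominating_pair joinX X3 Y3 xX yY)) _.
by rewrite cards2; case: (x != y).
Qed.

Lemma gamma_cer_leq_gamma_join (S X : {set T}) : disconnects (compl e) S X ->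
  ~ is_K2 e S -> gamma_cer e S <= gamma e S.
Proof.
move=> joinX notK2; have S2 := disconnects_card_gt1 joinX.
have S0 : S != set0 by rewrite -card_gt0 ltnW.
case: (boolP [exists w, universal S w]) => [/existsP[w univ]|/existsPn nouniv].
  have [/(universal_K2 univ)/notK2[]|S_neq2] := eqVneq #|S| 2.
  have S3 : 2 < #|S| by rewrite ltn_neqAle eq_sym S_neq2.
  exact: leq_trans (gamma_cer_universal univ S3) (gamma_gt0 S0).
apply: leq_trans (gamma_gt1 S0 nouniv).
apply: (gamma_cer_join joinX (universal_join_side joinX nouniv)).
exact: universal_join_side (disconnectsC (compl_sym e_sym) joinX) nouniv.
Qed.

Lemma P4_free_perfect : no_P4 e -> gamma_gammacer_perfect e.
Proof.
move=> noP4 S connS notK2; apply/eqP; rewrite eqn_leq gamma_leq_gamma_cer /=.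
have [S0 _] := connS; have [S1|S2] := leqP #|S| 1.
  apply: leq_trans (gamma_cer_min (certified_dominating_self S)) _.
  exact: leq_trans S1 (gamma_gt0 S0).
have [[X cutX]|[X joinX]] := cograph_decomposition e_sym noP4 S2.
  by case: (induced_connected_disconnects connS cutX).
exact: gamma_cer_leq_gamma_join joinX notK2.
Qed.

Hypothesis e_irr : irreflexive e.

Section InducedP4.
Variables a b c d : T.
Hypothesis abcd : P4 e a b c d.
Local Notation Q := [set a; b; c; d].

Lemma card_P4 : #|Q| = 4.
Proof.
have /card_uniqP /= <- := P4_uniq e_sym abcd.
by apply: eq_card => u; rewrite !inE -!orbA.
Qed.

Lemma P4_not_K2 : ~ is_K2 e Q.
Proof.
by case=> x [y [_ QE _]]; have := cards2 x y; rewrite -QE card_P4; case: (x != y).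
Qed.

Lemma P4_induced_connected : induced_connected e Q.
Proof.
have [aQ bQ cQ dQ] : [/\ a \in Q, b \in Q, c \in Q & d \in Q] by rewrite !inE !eqxx !orbT.
split; first by apply/set0Pn; exists a.
have /and4P[eab ebc ecd _] := abcd.
pose r x y := [&& x \in Q, y \in Q & e x y].
have r_sym : connect_sym r by apply: sym_connect_sym => x y; rewrite /r e_sym andbCA.
have ab : connect r a b by apply: connect1; rewrite /r aQ bQ eab.
have bc : connect r b c by apply: connect1; rewrite /r bQ cQ ebc.
have cd : connect r c d by apply: connect1; rewrite /r cQ dQ ecd.
have from_a x : x \in Q -> connect r a x.
  rewrite !inE -!orbA => /or4P[]/eqP->; [exact: connect0 | exact: ab | |].
    exact: connect_trans ab bc.
  exact: connect_trans (connect_trans ab bc) cd.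
by move=> x y xQ yQ; rewrite (connect_trans _ (from_a y yQ)) // r_sym from_a.
Qed.

Lemma gamma_P4 : gamma e Q <= 2.
Proof.
case/and4P: abcd => ab _ cd _.
apply: leq_trans (gamma_min (D := [set b; c]) _) _; last by rewrite cards2; case: (b != c).
apply/andP; split; first by rewrite subUset !sub1set !inE !eqxx !orbT.
apply/forall_inP => u; rewrite !inE -!orbA => /andP[/norP[ub uc] /or4P[]] /eqP uE;
  rewrite uE ?eqxx in ub uc; rewrite // uE; apply/exists_inP.
  by exists b; rewrite ?inE ?eqxx.
by exists c; rewrite ?inE ?eqxx ?orbT // e_sym.
Qed.

Lemma P4_end_neighbour w : w \in Q -> e a w -> w = b.
Proof.
case/and4P: abcd => _ _ _ /and3P[ac ad _].
by rewrite !inE -!orbA => /or4P[]/eqP-> //; rewrite ?e_irr ?(negbTE ac) ?(negbTE ad).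
Qed.

Lemma P4_inner_neighbour w : w \in Q -> e b w -> w = a \/ w = c.
Proof.
case/and4P: abcd => _ _ _ /and3P[_ _ bd].
by rewrite !inE -!orbA => /or4P[]/eqP->; rewrite ?e_irr ?(negbTE bd); auto.
Qed.

Lemma P4_inner_certified D : certified_dominating e Q D -> b \in D.
Proof.
move=> certD; have /andP[/andP[DQ /forall_inP domD] _] := certD.
have [aQ bQ] : a \in Q /\ b \in Q by rewrite !inE !eqxx !orbT.
apply: contraT => bD; have [aD|aD] := boolP (a \in D).
  have := certified_ndeg_neq1 certD aD.
  rewrite /ndeg (_ : [set _ in _ | _] = [set b]) ?cards1 //.
  apply/setP => w; rewrite in_set in_setD in_set1; apply/idP/eqP => [/andP[/andP[_ wQ]]|->].
    exact: P4_end_neighbour.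
  by case/andP: abcd => ->; rewrite bD bQ.
have aQD : a \in Q :\: D by rewrite in_setD aD aQ.
have /exists_inP[u uD /(P4_end_neighbour (subsetP DQ u uD)) ub] := domD a aQD.
by rewrite -ub uD in bD.
Qed.

Lemma P4_end_certified D : certified_dominating e Q D -> b \in D -> c \in D -> a \in D.
Proof.
move=> certD bD cD; have aQ : a \in Q by rewrite !inE eqxx.
apply: contraT => aD; have := certified_ndeg_neq1 certD bD.
rewrite /ndeg (_ : [set _ in _ | _] = [set a]) ?cards1 //.
apply/setP => w; rewrite in_set in_setD in_set1; apply/idP/eqP => [/andP[/andP[wD wQ]]|->].
  by case/(P4_inner_neighbour wQ) => // wc; rewrite wc cD in wD.
by case/andP: abcd => ab _; rewrite aD aQ e_sym ab.
Qed.

End InducedP4.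

Lemma gamma_cer_P4 (a b c d : T) : P4 e a b c d -> gamma_cer e [set a; b; c; d] = 4.
Proof.
move=> abcd; have [D certD <-] := certified_gamma_cer [set a; b; c; d].
have dcba := P4_rev e_sym abcd.
have rev : [set d; c; b; a] = [set a; b; c; d].
  by apply/setP => u; rewrite !inE; do 4!case: (u == _).
have certD' : certified_dominating e [set d; c; b; a] D by rewrite rev.
have bD := P4_inner_certified abcd certD; have cD := P4_inner_certified dcba certD'.
have aD := P4_end_certified abcd certD bD cD; have dD := P4_end_certified dcba certD' cD bD.
have /andP[/andP[DQ _] _] := certD.
suff -> : D = [set a; b; c; d] by exact: card_P4.
by apply/eqP; rewrite eqEsubset DQ !subUset !sub1set aD bD cD dD.
Qed.

Lemma P4_not_perfect (a b c d : T) : P4 e a b c d -> ~ gamma_gammacer_perfect e.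
Proof.
move=> abcd perf; have := perf _ (P4_induced_connected abcd) (P4_not_K2 abcd).
by rewrite gamma_cer_P4 // => gQ; have := gamma_P4 abcd; rewrite gQ.
Qed.

End Domination.

Theorem corollary2p8 (T : finType) (e : rel T)
  (e_sym : symmetric e) (e_irr : irreflexive e) :
  gamma_gammacer_perfect e <-> P4_free e.
Proof.
split=> [perf|/(P4_freeE e_sym)]; last exact: P4_free_perfect.
by apply/(P4_freeE e_sym) => a b c d; apply/negP => abcd; apply: P4_not_perfect abcd perf.
Qed.
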